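(* Let $r\ge 1$ be an odd integer. For every nonnegative integer $n$, the number of overpartitions of $n$ in which every non-overlined part is even and greater than $r$ (overlined parts being unrestricted apart from being distinct) equals the number of partitions of $n$ in which no even integer less than $r$ appears as a part.
   Context: A partition of $n$ is a finite non-increasing sequence of positive integers (parts) summing to $n$ (the empty partition is the unique partition of $0$). An overpartition of $n$ is a partition of $n$ in which the first occurrence of each part size may be overlined; equivalently, a pair $(\lambda,\mu)$ with $\lambda$ a partition into distinct parts (the overlined parts), $\mu$ an arbitrary partition (the non-overlined parts), and $|\lambda|+|\mu|=n$. *)

From mathcomp Require Import all_boot.
Set Implicit Arguments.
Unset Strict Implicit.
Unset Printing Implicit Defensive.

Definition is_partition (n : nat) (s : seq nat) : bool :=
  [&& sorted geq s, all (fun p => 0 < p) s & sumn s == n].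

Definition is_distinct_partition (n : nat) (s : seq nat) : bool :=
  [&& sorted gtn s, all (fun p => 0 < p) s & sumn s == n].

(* An overpartition of n, as a pair (lambda, mu): lambda the overlined parts
   (distinct), mu the non-overlined parts, |lambda| + |mu| = n. *)
Definition is_overpartition (n : nat) (lm : seq nat * seq nat) : Prop :=
  is_distinct_partition (sumn lm.1) lm.1 /\ is_partition (sumn lm.2) lm.2 /\
  sumn lm.1 + sumn lm.2 = n.

(* "The number of elements of T satisfying P is k": P has a duplicate-free
   exhaustive enumeration of length k (in particular P is finite). *)
Definition has_card (T : eqType) (P : T -> Prop) (k : nat) : Prop :=
  exists s : seq T, [/\ uniq s, (forall x, P x <-> x \in s) & size s = k].

From mathcomp Require Import all_boot.
Set Implicit Arguments. Unset Strict Implicit.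

(* Both sides split according to parity: an overpartition into its overlined
   parts (distinct) and its non-overlined parts (even and > r), a partition
   into its odd parts and its even parts (>= r, hence > r as r is odd).  The
   even parts are kept as they are, and the remaining parts are matched by
   Glaisher's bijection between partitions into distinct parts and partitions
   into odd parts: a part m 2^k with m odd becomes 2^k copies of m, and
   conversely the binary digits of the multiplicity of an odd part m say
   which parts m 2^k to take. *)

Lemma geq_trans : transitive geq. Proof. exact: rev_trans leq_trans. Qed.
Lemma geq_total : total geq. Proof. by move=> m n; rewrite /= orbC leq_total. Qed.
Lemma gtn_trans : transitive gtn. Proof. exact: rev_trans ltn_trans. Qed.
Lemma gtn_irr : irreflexive gtn. Proof. exact: ltnn. Qed.
Lemma anti_geq : antisymmetric geq.
Proof. by move=> m n; rewrite andbC => /anti_leq. Qed.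

Lemma leq_count_sumn x s : count_mem x s * x <= sumn s.
Proof.
elim: s => //= y s IH; rewrite mulnDl.
case: eqP => [->|_]; first by rewrite mul1n leq_add2l.
by rewrite mul0n add0n (leq_trans IH) ?leq_addl.
Qed.

Lemma leq_sumn_mem x s : x \in s -> x <= sumn s.
Proof.
rewrite -has_pred1 has_count => /(leq_pmull x) /leq_trans; apply.
exact: leq_count_sumn.
Qed.

Lemma size_leq_sumn s : all (fun p => 0 < p) s -> size s <= sumn s.
Proof. by elim: s => //= p s IH /andP [p0 /IH]; rewrite -add1n; apply: leq_add. Qed.

Lemma sumn_filterC (a : pred nat) s :
  sumn [seq p <- s | a p] + sumn [seq p <- s | ~~ a p] = sumn s.
Proof. by rewrite -sumn_cat; apply/perm_sumn; rewrite perm_filterC. Qed.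

Lemma sum_binary_recl N (b : nat -> bool) :
  \sum_(i < N.+1) b i * 2 ^ i = b 0 + (\sum_(i < N) b i.+1 * 2 ^ i).*2.
Proof.
rewrite big_ord_recl muln1 -mul2n big_distrr; congr (_ + _).
by apply: eq_bigr => i _; rewrite expnS mulnCA.
Qed.

Lemma sum_binary_digits N c : c < 2 ^ N -> \sum_(i < N) odd (c %/ 2 ^ i) * 2 ^ i = c.
Proof.
elim: N c => [|N IH] c; first by rewrite big_ord0; case: c.
rewrite expnS => cN; rewrite (sum_binary_recl N (fun i => odd (c %/ 2 ^ i))) divn1.
rewrite (eq_bigr (fun i : 'I_N => odd (c./2 %/ 2 ^ i) * 2 ^ i)) => [|i _].
  by rewrite IH ?odd_double_half // -divn2 ltn_divLR // mulnC.
by rewrite expnS divnMA divn2.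
Qed.

Lemma odd_sum_binary N (b : nat -> bool) j :
  j < N -> odd ((\sum_(i < N) b i * 2 ^ i) %/ 2 ^ j) = b j.
Proof.
elim: N b j => [|N IH] b [|j] //= jN; rewrite sum_binary_recl.
  by rewrite expn0 divn1 oddD odd_double addbF; case: (b 0).
by rewrite expnS divnMA divn2 half_bit_double (IH (fun i => b i.+1)).
Qed.

Definition odd_part d := d %/ 2 ^ logn 2 d.

Lemma odd_partK d : odd_part d * 2 ^ logn 2 d = d.
Proof. by rewrite divnK // pfactor_dvdnn. Qed.

Lemma odd_odd_part d : 0 < d -> odd (odd_part d).
Proof.
move=> d0; rewrite /odd_part -p_part -{1}(partnC 2 d0) mulKn ?part_gt0 //.
by rewrite odd_2'nat part_pnat.
Qed.

Lemma logn2_oddM m i : odd m -> logn 2 (m * 2 ^ i) = i.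
Proof.
move=> om; rewrite lognM ?expn_gt0 ?(odd_gt0 om) // pfactorK // logn_coprime //.
by rewrite coprime_sym coprimen2.
Qed.

Lemma odd_part_oddM m i : odd m -> odd_part (m * 2 ^ i) = m.
Proof. by move=> om; rewrite /odd_part logn2_oddM // mulnK ?expn_gt0. Qed.

Lemma eq_oddM d m i : 0 < d -> odd m ->
  (d == m * 2 ^ i) = (odd_part d == m) && (logn 2 d == i).
Proof.
move=> d0 om; apply/eqP/andP => [->|[/eqP <- /eqP <-]]; last by rewrite odd_partK.
by rewrite odd_part_oddM // logn2_oddM.
Qed.

Definition glaisher (l : seq nat) : seq nat :=
  flatten [seq nseq (2 ^ logn 2 d) (odd_part d) | d <- l].

Lemma sumn_glaisher l : sumn (glaisher l) = sumn l.
Proof. by elim: l => //= d l IH; rewrite sumn_cat sumn_nseq odd_partK IH. Qed.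

Lemma all_odd_glaisher l : all (fun d => 0 < d) l -> all odd (glaisher l).
Proof.
move=> /allP l_gt0; apply/allP => x /flattenP [_ /mapP [d dl ->]] /nseqP [-> _].
exact/odd_odd_part/l_gt0.
Qed.

Lemma count_glaisher N m l : odd m -> uniq l -> all (fun d => 0 < d <= N) l ->
  count_mem m (glaisher l) = \sum_(i < N) (m * 2 ^ i \in l) * 2 ^ i.
Proof.
move=> om ul /allP lN; rewrite /glaisher count_flatten -map_comp sumnE big_map.
rewrite (eq_big_seq (fun d => \sum_(i < N) (d == m * 2 ^ i) * 2 ^ i)) => [|d dl].
  rewrite exchange_big; apply: eq_bigr => i _ /=.
  by rewrite -big_distrl /= -count_uniq_mem // -sum1_count [in RHS]big_mkcond.
have /andP [d0 dN] := lN d dl.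
have logd : logn 2 d < N := leq_trans (ltn_logl 2 d0) dN.
rewrite /= count_nseq.
have := big_ord1_eq addn (fun i => 2 ^ i) (logn 2 d) N; rewrite logd => <-.
rewrite big_distrr big_mkcond; apply: eq_bigr => i _ /=.
by rewrite eq_oddM // [logn 2 d == i]eq_sym andbC; case: (i == _ :> nat).
Qed.

Definition unglaisher (o : seq nat) : seq nat :=
  rev [seq d <- iota 1 (sumn o) | odd (count_mem (odd_part d) o %/ 2 ^ logn 2 d)].

Lemma mem_unglaisher o d : (d \in unglaisher o) =
  (0 < d <= sumn o) && odd (count_mem (odd_part d) o %/ 2 ^ logn 2 d).
Proof. by rewrite mem_rev mem_filter mem_iota andbC add1n ltnS. Qed.

Lemma sorted_unglaisher o : sorted gtn (unglaisher o).
Proof. by rewrite rev_sorted; apply/sorted_filter/iota_ltn_sorted/ltn_trans. Qed.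

Lemma uniq_unglaisher o : uniq (unglaisher o).
Proof. exact (sorted_uniq gtn_trans gtn_irr (sorted_unglaisher o)). Qed.

Lemma perm_unglaisher o o' : perm_eq o o' -> unglaisher o = unglaisher o'.
Proof.
move=> oo'; rewrite /unglaisher (perm_sumn oo'); congr rev.
by apply: eq_filter => d; rewrite (permP oo').
Qed.

Lemma mem_unglaisher_oddM o m i : odd m ->
  (m * 2 ^ i \in unglaisher o) = odd (count_mem m o %/ 2 ^ i).
Proof.
move=> om; rewrite mem_unglaisher odd_part_oddM // logn2_oddM //.
case: (boolP (odd _)) => [bit_i|]; rewrite ?andbF // andbT muln_gt0 odd_gt0 ?expn_gt0 //=.
have: 0 < count_mem m o %/ 2 ^ i by case: (_ %/ _) bit_i.
rewrite divn_gt0 ?expn_gt0 // => /(leq_mul (leqnn m)) /leq_trans; apply.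
by rewrite mulnC leq_count_sumn.
Qed.

Lemma glaisherK l : sorted gtn l -> all (fun d => 0 < d) l -> unglaisher (glaisher l) = l.
Proof.
move=> ls /allP l_gt0; set n := sumn l.
have l_n : all (fun d => 0 < d <= n) l.
  by apply/allP => d dl; rewrite l_gt0 ?leq_sumn_mem.
have ul : uniq l := sorted_uniq gtn_trans gtn_irr ls.
apply: (irr_sorted_eq gtn_trans gtn_irr (sorted_unglaisher _) ls) => d.
rewrite mem_unglaisher sumn_glaisher -/n.
have [/andP [d0 dn]|d_out] := boolP (0 < d <= n); last first.
  by apply/esym/negP => /(allP l_n); apply/negP.
rewrite (count_glaisher (odd_odd_part d0) ul l_n).
rewrite (odd_sum_binary (fun i => odd_part d * 2 ^ i \in l)) ?odd_partK //.
exact: leq_trans (ltn_logl 2 d0) dn.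
Qed.

Lemma unglaisherK o : all odd o -> perm_eq (glaisher (unglaisher o)) o.
Proof.
move=> /allP o_odd; set n := sumn o.
have u_n : all (fun d => 0 < d <= n) (unglaisher o).
  by apply/allP => d; rewrite mem_unglaisher => /andP [].
have u_gt0 : all (fun d => 0 < d) (unglaisher o).
  by apply: sub_all u_n => d /andP [].
apply/allP => x _; apply/eqP; have [x_odd|x_even] := boolP (odd x).
  rewrite (count_glaisher x_odd (uniq_unglaisher o) u_n).
  under eq_bigr => i _ do rewrite mem_unglaisher_oddM //.
  rewrite sum_binary_digits // (leq_ltn_trans _ (ltn_expl n (ltnSn 1))) //.
  by rewrite -[leqLHS]muln1 (leq_trans _ (leq_count_sumn x o)) ?leq_mul2l ?odd_gt0 ?orbT.
have x_nin s : all odd s -> count_mem x s = 0.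
  by move=> /allP s_odd; apply/count_memPn; apply: contraNN x_even => /s_odd.
by rewrite !x_nin ?all_odd_glaisher //; apply/allP.
Qed.

Definition merge_overpartition (lm : seq nat * seq nat) : seq nat :=
  sort geq (glaisher lm.1 ++ lm.2).

Definition split_partition (s : seq nat) : seq nat * seq nat :=
  (unglaisher [seq p <- s | odd p], [seq p <- s | ~~ odd p]).

Lemma filter_cat_all (T : eqType) (a : pred T) s t : all a s -> all (predC a) t ->
  filter a (s ++ t) = s /\ filter (predC a) (s ++ t) = t.
Proof.
move=> /[dup] /all_filterP s_id /allP sa /[dup] /all_filterP t_id /allP ta.
rewrite !filter_cat s_id t_id.
rewrite (eq_in_filter (a1 := a) (a2 := pred0) (s := t)) => [|x /ta /negbTE //].
rewrite (eq_in_filter (a1 := predC a) (a2 := pred0) (s := s)) => [|x /sa /= -> //].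
by rewrite !filter_pred0 cats0.
Qed.

Lemma merge_overpartitionK l u :
  sorted gtn l -> all (fun d => 0 < d) l -> sorted geq u -> all (fun p => ~~ odd p) u ->
  split_partition (merge_overpartition (l, u)) = (l, u).
Proof.
move=> ls l_gt0 us u_even; rewrite /split_partition /merge_overpartition /=.
rewrite !(filter_sort geq_total geq_trans).
have [-> ->] := filter_cat_all (all_odd_glaisher l_gt0) u_even.
rewrite (sorted_sort geq_trans us).
by rewrite (perm_unglaisher (permEl (perm_sort geq _))) glaisherK.
Qed.

Lemma split_partitionK s : sorted geq s -> merge_overpartition (split_partition s) = s.
Proof.
move=> ss; apply: (sorted_eq geq_trans anti_geq (sort_sorted geq_total _) ss).
rewrite perm_sort /=; apply: perm_trans (permEl (perm_filterC odd s)).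
by rewrite perm_cat2r unglaisherK ?filter_all.
Qed.

Lemma merge_overpartitionP n r lm :
  is_overpartition n lm -> all (fun p => ~~ odd p && (r < p)) lm.2 ->
  is_partition n (merge_overpartition lm) /\
  all (fun p => ~~ (~~ odd p && (p < r))) (merge_overpartition lm).
Proof.
case: lm => l u [/and3P [_ l_gt0 _] [/and3P [_ u_gt0 _] /= lu_n]] u_r.
have l_odd := all_odd_glaisher l_gt0.
have mem_merge x : x \in merge_overpartition (l, u) = (x \in glaisher l) || (x \in u).
  by rewrite mem_sort mem_cat.
split; last first.
  apply/allP => x; rewrite mem_merge => /orP [/(allP l_odd) -> //|/(allP u_r)].
  by case/andP => _ /ltnW rx; rewrite ltnNge rx andbF.
apply/and3P; split; first exact: sort_sorted geq_total _.
  by apply/allP => x; rewrite mem_merge => /orP [/(allP l_odd)/odd_gt0|/(allP u_gt0)].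
by rewrite (perm_sumn (permEl (perm_sort _ _))) sumn_cat sumn_glaisher lu_n.
Qed.

Lemma split_partitionP n r s : odd r ->
  is_partition n s -> all (fun p => ~~ (~~ odd p && (p < r))) s ->
  is_overpartition n (split_partition s) /\
  all (fun p => ~~ odd p && (r < p)) (split_partition s).2.
Proof.
move=> r_odd /and3P [ss s_gt0 /eqP sn] s_r; split; last first.
  apply/allP => p; rewrite mem_filter => /andP [p_even /(allP s_r)].
  rewrite p_even -leqNgt leq_eqVlt => /orP [/eqP r_p|//].
  by move: p_even; rewrite -r_p r_odd.
split; [|split].
- rewrite /is_distinct_partition sorted_unglaisher eqxx andbT /=.
  by apply/allP => d; rewrite mem_unglaisher => /andP [/andP []].
- rewrite /is_partition (sorted_filter geq_trans _ ss) eqxx andbT /=.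
  by apply/allP => p; rewrite mem_filter => /andP [_ /(allP s_gt0)].
- rewrite /= -sumn_glaisher (perm_sumn (unglaisherK (filter_all _ _))).
  by rewrite sumn_filterC.
Qed.

Lemma has_card_finite (T : eqType) (P : T -> Prop) (p : pred T) (L : seq T) :
  (forall x, P x <-> p x) -> (forall x, p x -> x \in L) -> exists k, has_card P k.
Proof.
move=> Pp pL; exists (size [seq x <- undup L | p x]).
exists [seq x <- undup L | p x]; split => // [|x].
  by rewrite filter_uniq ?undup_uniq.
rewrite mem_filter mem_undup; split => [/Pp px|/andP [/Pp //]].
by rewrite px pL.
Qed.

Lemma has_card_bij (T U : eqType) (P : T -> Prop) (Q : U -> Prop)
    (f : T -> U) (g : U -> T) k :
  (forall x, P x -> Q (f x)) -> (forall y, Q y -> P (g y)) ->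
  (forall x, P x -> g (f x) = x) -> (forall y, Q y -> f (g y) = y) ->
  has_card P k -> has_card Q k.
Proof.
move=> PQ QP fK gK [e [ue Pe <-]]; exists (map f e); split; last exact: size_map.
  rewrite map_inj_in_uniq // => x y /Pe Px /Pe Py fxy.
  by rewrite -(fK x Px) fxy fK.
move=> y; split => [Qy|/mapP [x /Pe Px ->]]; last exact: PQ.
by apply/mapP; exists (g y); [apply/Pe/QP | rewrite gK].
Qed.

Fixpoint bounded_seqs (k m : nat) : seq (seq nat) :=
  if k is k'.+1 then [::] :: [seq x :: s | x <- iota 0 m.+1, s <- bounded_seqs k' m]
  else [:: [::]].

Lemma mem_bounded_seqs k m s :
  size s <= k -> all (fun x => x <= m) s -> s \in bounded_seqs k m.
Proof.
elim: k s => [|k IH] [|x s] // sk /andP [xm sm].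
rewrite in_cons; apply/orP; right; apply/allpairsPdep; exists x, s.
by rewrite mem_iota ltnS xm IH.
Qed.

Lemma partition_mem_bounded_seqs n s : is_partition n s -> s \in bounded_seqs n n.
Proof.
case/and3P => _ s_gt0 /eqP <-; apply: mem_bounded_seqs; first exact: size_leq_sumn.
by apply/allP => x; apply: leq_sumn_mem.
Qed.

Theorem proposition2p4 (r : nat) (hr1 : 1 <= r) (hr : odd r) (n : nat) :
  exists k : nat,
    has_card (fun lm : seq nat * seq nat =>
                is_overpartition n lm /\
                all (fun p => ~~ odd p && (r < p)) lm.2) k /\
    has_card (fun s : seq nat =>
                is_partition n s /\
                all (fun p => ~~ (~~ odd p && (p < r))) s) k.
Proof.
(* [hr1] is redundant: [odd r] already forces [1 <= r]. *)
have [k card_parts] : exists k, has_card (fun s : seq nat => is_partition n s /\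
                all (fun p => ~~ (~~ odd p && (p < r))) s) k.
  apply: (has_card_finite
    (p := fun s => is_partition n s && all (fun p => ~~ (~~ odd p && (p < r))) s)
    (L := bounded_seqs n n)) => [s|s /andP [/partition_mem_bounded_seqs //]].
  exact: rwP andP.
exists k; split => //.
apply: (has_card_bij (f := split_partition) (g := merge_overpartition)
          _ _ _ _ card_parts).
- by move=> s [ps s_r]; apply: split_partitionP.
- by move=> lm [plm lm_r]; apply: merge_overpartitionP.
- by move=> s [/and3P [ss _ _] _]; apply: split_partitionK.
- case=> l u [[/and3P [ls l_gt0 _] [/and3P [us _ _] _]] u_r].
  by apply: merge_overpartitionK => //; apply: sub_all u_r => p /andP [].
Qed.
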